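(* Let $m$ be a monitor in open normal form, $s\in\mathit{Act}^*$ and $x$ a variable such that $m\xrightarrow{s}m_s$ for some $m_s$ having $x$ as a summand. Then $\mathcal{E}_v\vdash m=m'+s.x$ for some monitor $m'$ such that there is no $m''$ with $m'\xrightarrow{s}m''$ and $m''$ having $x$ as a summand.
   Context: Monitors: terms $m,n ::= v \mid a.m \mid m+n \mid x$ over a nonempty action set $\mathit{Act}$ and variables $x$, verdicts $v::=\mathit{end}\mid\mathit{yes}\mid\mathit{no}$. Terms are considered modulo A1–A4 below; a term $t$ has $x$ as a summand if $t=x+t'$ modulo A1–A4 for some $t'$; $\sum_{i\in I}m_i$ is $\mathit{end}$ for $I=\emptyset$. For $s=a_1\dots a_k$, $s.m$ denotes $a_1.(\cdots a_k.m)$ ($\varepsilon.m=m$), and $m\xrightarrow{s}m'$ means $m=m_0\xrightarrow{a_1}m_1\cdots\xrightarrow{a_k}m_k=m'$, where $\xrightarrow{a}$ is the least relation with $a.m\xrightarrow{a}m$, $m\xrightarrow{a}m'$ implying $m+n\xrightarrow{a}m'$ and $n+m\xrightarrow{a}m'$, and $v\xrightarrow{a}v$ for verdicts $v$ (variables have no transitions). An open normal form is a term $\sum_{a\in A}a.m_a+\sum_{i\in I}x_i\ [+\mathit{yes}]\ [+\mathit{no}]$ with $A\subseteq\mathit{Act}$ finite (one summand per $a\in A$), $\{x_i\mid i\in I\}$ a finite set of distinct variables, and each $m_a$ an open normal form different from $\mathit{end}$. $\mathcal{E}\vdash m=n$ denotes derivability by the rules of equational logic. $\mathcal{E}_v$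 consists of (A1) $x+y=y+x$; (A2) $x+(y+z)=(x+y)+z$; (A3) $x+x=x$; (A4) $x+\mathit{end}=x$; and, for each $a\in\mathit{Act}$, ($E_a$) $a.\mathit{end}=\mathit{end}$; ($Y_a$) $\mathit{yes}=\mathit{yes}+a.\mathit{yes}$; ($N_a$) $\mathit{no}=\mathit{no}+a.\mathit{no}$; ($D_a$) $a.(x+y)=a.x+a.y$. *)

From Stdlib Require Import List.
Import ListNotations.
Set Implicit Arguments.

Inductive verdict : Type := vend | vyes | vno.

Section Monitors.
Variables (A V : Type).  (* A = Act (actions), V = variables *)

Inductive mon : Type :=
| Verd : verdict -> mon
| Pre  : A -> mon -> mon
| Sum  : mon -> mon -> mon
| Var  : V -> mon.

Definition mend : mon := Verd vend.

Fixpoint subst (sg : V -> mon) (t : mon) : mon :=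
  match t with
  | Verd v => Verd v
  | Pre a m => Pre a (subst sg m)
  | Sum m n => Sum (subst sg m) (subst sg n)
  | Var x => sg x
  end.

Inductive derivable (ax : mon -> mon -> Prop) : mon -> mon -> Prop :=
| d_ax    : forall t u, ax t u -> derivable ax t u
| d_refl  : forall t, derivable ax t t
| d_sym   : forall t u, derivable ax t u -> derivable ax u t
| d_trans : forall t u w, derivable ax t u -> derivable ax u w -> derivable ax t w
| d_pre   : forall a t u, derivable ax t u -> derivable ax (Pre a t) (Pre a u)
| d_sum   : forall t1 u1 t2 u2, derivable ax t1 u1 -> derivable ax t2 u2 ->
              derivable ax (Sum t1 t2) (Sum u1 u2)
| d_subst : forall sg t u, derivable ax t u -> derivable ax (subst sg t) (subst sg u).

Inductive axA : mon -> mon -> Prop :=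
| A1 : forall x y, axA (Sum x y) (Sum y x)
| A2 : forall x y z, axA (Sum x (Sum y z)) (Sum (Sum x y) z)
| A3 : forall x, axA (Sum x x) x
| A4 : forall x, axA (Sum x mend) x.

Inductive axEv : mon -> mon -> Prop :=
| Ev_A : forall t u, axA t u -> axEv t u
| Ev_E : forall a, axEv (Pre a mend) mend
| Ev_Y : forall a, axEv (Verd vyes) (Sum (Verd vyes) (Pre a (Verd vyes)))
| Ev_N : forall a, axEv (Verd vno) (Sum (Verd vno) (Pre a (Verd vno)))
| Ev_D : forall a x y, axEv (Pre a (Sum x y)) (Sum (Pre a x) (Pre a y)).

Definition ac_eq := derivable axA.
Definition Ev_eq := derivable axEv.

Definition has_summand (t : mon) (x : V) : Prop :=
  exists t', ac_eq t (Sum (Var x) t').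

Inductive step : mon -> A -> mon -> Prop :=
| st_pre  : forall a m, step (Pre a m) a m
| st_suml : forall m n a m', step m a m' -> step (Sum m n) a m'
| st_sumr : forall m n a m', step n a m' -> step (Sum m n) a m'
| st_verd : forall v a, step (Verd v) a (Verd v).

Inductive steps : mon -> list A -> mon -> Prop :=
| sts_nil  : forall m, steps m [] m
| sts_cons : forall m a s m1 m2, step m a m1 -> steps m1 s m2 -> steps m (a :: s) m2.

Definition pref (s : list A) (m : mon) : mon := fold_right Pre m s.

(* sum_{a in l} a.m_a + sum_{x in xs} x [+ yes] [+ no], empty sum = end *)
Definition nf_term (l : list (A * mon)) (xs : list V) (y n : bool) : mon :=
  fold_right (fun p t => Sum (Pre (fst p) (snd p)) t)
    (fold_right (fun x t => Sum (Var x) t)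
       (Sum (if y then Verd vyes else mend) (if n then Verd vno else mend))
       xs) l.

Inductive onf : mon -> Prop :=
| onf_intro : forall (l : list (A * mon)) (xs : list V) (y n : bool) (t : mon),
    NoDup (map fst l) ->
    NoDup xs ->
    (forall p, In p l -> onf (snd p) /\ ~ ac_eq (snd p) mend) ->
    ac_eq t (nf_term l xs y n) ->
    onf t.

End Monitors.

From Stdlib Require Import List ClassicalEpsilon.
Import ListNotations.
Set Implicit Arguments.

(* Call [x] a top-level summand of a term when it occurs as a
   leaf of the outermost tree of [+].  This syntactic notion is invariant under
   A1-A4, hence implied by [has_summand].  For a word [s], the term [del s t]
   erases from [t] exactly the occurrences of [x] sitting at the end of an
   [s]-path: it follows the prefixes of [s] through [t] and replaces the
   variable [x] reached at the end by [end].  Two facts about [del] give the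
   theorem, for every term [t]:
   - no [s]-derivative of [del s t] has [x] as a top-level summand;
   - if some [s]-derivative of [t] has, then [E_v |- t = del s t + s.x],
     by induction on [t], using the distributivity axiom D_a under prefixes
     and A1-A4 (idempotence absorbs the summand [s.x] contributed by both
     sides of a sum).
   Terms with no such derivative are left unchanged by [del]. *)

Section TopSummands.
Variables (A V : Type).

Notation M := (mon A V).

Fixpoint top_summand (y : V) (t : M) : Prop :=
  match t with
  | Var _ z => z = y
  | Sum t1 t2 => top_summand y t1 \/ top_summand y t2
  | _ => False
  end.

Lemma subst_subst (sg sg' : V -> M) (t : M) :
  subst sg (subst sg' t) = subst (fun z => subst sg (sg' z)) t.
Proof. induction t; simpl; congruence. Qed.

Lemma subst_Var (t : M) : subst (@Var A V) t = t.
Proof. induction t; simpl; congruence. Qed.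

(* A1-A4 preserve top-level summands; the statement is closed under
   substitution so that the rule [d_subst] goes through the induction. *)
Lemma ac_eq_top_summand (t u : M) : ac_eq t u ->
  forall sg y, top_summand y (subst sg t) <-> top_summand y (subst sg u).
Proof.
  induction 1 as [t u Hax| |t u _ IH|t u w _ IH1 _ IH2|a t u _ IH
                 |t1 u1 t2 u2 _ IH1 _ IH2|sg' t u _ IH]; intros sg y; simpl.
  - destruct Hax; simpl; tauto.
  - reflexivity.
  - symmetry. apply IH.
  - rewrite IH1. apply IH2.
  - reflexivity.
  - rewrite IH1, IH2. reflexivity.
  - rewrite !subst_subst. apply IH.
Qed.

Lemma has_summand_top (t : M) (y : V) : has_summand t y -> top_summand y t.
Proof.
  intros [t' Hac].
  pose proof (ac_eq_top_summand Hac (@Var A V) y) as Hiff.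
  rewrite !subst_Var in Hiff. apply Hiff. simpl. auto.
Qed.

End TopSummands.

Section Deletion.
Variables (A V : Type) (x : V).

Notation M := (mon A V).
Notation E := (@Ev_eq A V).

Definition reaches (s : list A) (t : M) : Prop :=
  exists t', steps t s t' /\ top_summand x t'.

Lemma steps_verdict v s (t' : M) : steps (Verd A V v) s t' -> t' = Verd A V v.
Proof.
  revert t'; induction s; intros t' H; inversion H as [|? ? ? t1 ? Hst Hsts]; subst;
    auto.
  inversion Hst; subst. auto.
Qed.

Lemma reaches_verdict v s : ~ reaches s (Verd A V v).
Proof. intros [t' [Hs Ht]]. apply steps_verdict in Hs. subst. exact Ht. Qed.

Lemma reaches_var_cons a s (y : V) : ~ reaches (a :: s) (Var A y).
Proof. intros [t' [Hs _]]. inversion Hs as [|? ? ? t1 ? Hst _]. inversion Hst. Qed.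

Lemma reaches_nil (t : M) : reaches [] t <-> top_summand x t.
Proof.
  split.
  - intros [t' [Hs Ht]]. inversion Hs; subst. exact Ht.
  - intros Ht. exists t. split; [constructor | exact Ht].
Qed.

Lemma reaches_sum s (t1 t2 : M) :
  reaches s (Sum t1 t2) <-> reaches s t1 \/ reaches s t2.
Proof.
  destruct s as [|a s].
  { rewrite !reaches_nil. reflexivity. }
  split.
  - intros [t' [Hs Ht]]. inversion Hs as [|? ? ? t0 ? Hst Hsts]; subst.
    inversion Hst; subst; [left | right]; exists t'; split; eauto using steps.
  - intros [[t' [Hs Ht]] | [t' [Hs Ht]]];
      inversion Hs as [|? ? ? t0 ? Hst Hsts]; subst; exists t'; split;
      eauto using steps, step.
Qed.

Lemma reaches_pre a s b (t : M) : reaches (a :: s) (Pre b t) <-> b = a /\ reaches s t.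
Proof.
  split.
  - intros [t' [Hs Ht]]. inversion Hs as [|? ? ? t0 ? Hst Hsts]; subst.
    inversion Hst; subst. split; [reflexivity | exists t'; auto].
  - intros [-> [t' [Hs Ht]]]. exists t'. split; eauto using steps, step.
Qed.

(* Decisions on equality of actions and variables are classical: [A] and [V]
   are arbitrary types. *)
Definition decide (P : Prop) : {P} + {~ P} := excluded_middle_informative P.

Fixpoint del (s : list A) (t : M) : M :=
  match t with
  | Verd _ _ v => Verd A V v
  | Var _ y =>
      match s with
      | [] => if decide (y = x) then mend A V else Var A y
      | _ => Var A y
      end
  | Sum t1 t2 => Sum (del s t1) (del s t2)
  | Pre b t0 =>
      match s with
      | [] => Pre b t0
      | a :: s' => if decide (b = a) then Pre b (del s' t0) else Pre b t0
      end
  end.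

Lemma del_not_reaches (t : M) : forall s, ~ reaches s (del s t).
Proof.
  induction t as [v|b t IH|t1 IH1 t2 IH2|y]; intros [|a s]; simpl.
  - apply reaches_verdict.
  - apply reaches_verdict.
  - rewrite reaches_nil. simpl. tauto.
  - destruct (decide (b = a)); rewrite reaches_pre; [intros [_ H] | tauto].
    exact (IH s H).
  - rewrite reaches_sum. intros [H | H]; [exact (IH1 _ H) | exact (IH2 _ H)].
  - rewrite reaches_sum. intros [H | H]; [exact (IH1 _ H) | exact (IH2 _ H)].
  - rewrite reaches_nil. destruct (decide (y = x)); simpl; tauto.
  - apply reaches_var_cons.
Qed.

Lemma del_unreached (t : M) : forall s, ~ reaches s t -> del s t = t.
Proof.
  induction t as [v|b t IH|t1 IH1 t2 IH2|y]; intros [|a s] H; simpl; auto.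
  - destruct (decide (b = a)) as [-> | _]; auto.
    rewrite IH; auto. intros R. apply H, reaches_pre. auto.
  - rewrite reaches_sum in H. rewrite IH1, IH2; auto.
  - rewrite reaches_sum in H. rewrite IH1, IH2; auto.
  - destruct (decide (y = x)) as [-> | _]; auto.
    exfalso. apply H, reaches_nil. reflexivity.
Qed.

Lemma E_ac (t u : M) : axA t u -> E t u.
Proof. intros H. apply d_ax, Ev_A, H. Qed.

Lemma E_sum_swap_right (d1 d2 p : M) : E (Sum (Sum d1 p) d2) (Sum (Sum d1 d2) p).
Proof.
  eapply d_trans; [apply d_sym, E_ac, A2 |].
  eapply d_trans; [apply d_sum; [apply d_refl | apply E_ac, A1] |].
  apply E_ac, A2.
Qed.

Lemma E_sum_absorb (d1 d2 p : M) :
  E (Sum (Sum d1 p) (Sum d2 p)) (Sum (Sum d1 d2) p).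
Proof.
  eapply d_trans; [apply E_sum_swap_right |].
  eapply d_trans; [apply d_sym, E_ac, A2 |].
  eapply d_trans; [apply d_sum; [apply d_refl | apply d_sym, E_ac, A2] |].
  eapply d_trans; [apply d_sum; [apply d_refl | apply d_sum; [apply d_refl | apply E_ac, A3]] |].
  apply E_ac, A2.
Qed.

Lemma del_decomposition (t : M) :
  forall s, reaches s t -> E t (Sum (del s t) (pref s (Var A x))).
Proof.
  induction t as [v|b t IH|t1 IH1 t2 IH2|y]; intros s H.
  - exfalso. exact (reaches_verdict H).
  - destruct s as [|a s]; [apply reaches_nil in H; destruct H |].
    apply reaches_pre in H as [-> H]. simpl.
    destruct (decide (a = a)) as [_ | n]; [| congruence].
    eapply d_trans; [apply d_pre, (IH s H) | apply d_ax, Ev_D].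
  - simpl.
    destruct (classic (reaches s t1)) as [R1 | R1];
      destruct (classic (reaches s t2)) as [R2 | R2].
    + eapply d_trans; [apply d_sum; [apply (IH1 s R1) | apply (IH2 s R2)] |].
      apply E_sum_absorb.
    + rewrite (del_unreached R2).
      eapply d_trans; [apply d_sum; [apply (IH1 s R1) | apply d_refl] |].
      apply E_sum_swap_right.
    + rewrite (del_unreached R1).
      eapply d_trans; [apply d_sum; [apply d_refl | apply (IH2 s R2)] |].
      apply E_ac, A2.
    + exfalso. apply reaches_sum in H. tauto.
  - destruct s as [|a s]; [| exfalso; exact (reaches_var_cons H)].
    apply reaches_nil in H. simpl in H. subst y. simpl.
    destruct (decide (x = x)) as [_ | n]; [| congruence].
    eapply d_trans; [apply d_sym, E_ac, (A4 (Var A x)) | apply E_ac, A1].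
Qed.

End Deletion.

Theorem mainTheorem13 (A V : Type) (Hne : inhabited A)
  (m : mon A V) (s : list A) (x : V) :
  onf m ->
  (exists ms, steps m s ms /\ has_summand ms x) ->
  exists m', Ev_eq m (Sum m' (pref s (Var A x))) /\
    ~ (exists m'', steps m' s m'' /\ has_summand m'' x).
Proof.
  intros _ [ms [Hsteps Hsum]].
  assert (Hreach : reaches x s m)
    by (exists ms; split; [exact Hsteps | exact (has_summand_top Hsum)]).
  exists (del x s m). split.
  - exact (del_decomposition Hreach).
  - intros [m'' [Hsteps'' Hsum'']].
    apply (@del_not_reaches A V x m s).
    exists m''. split; [exact Hsteps'' | exact (has_summand_top Hsum'')].
Qed.
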